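(* Let $q,r,\nu$ be positive integers with $r\ge q$ and $\nu\ge q$. There exists a matrix $C\in\mathbb{R}^{\nu r\times q}$ not depending on $z$ such that $\mathcal{M}^0(z)C=I_q$ for all $z$; consequently for every $b\in\mathbb{R}^q$ the equation $\mathcal{M}^0(z)X=b$ has the $z$-independent solution $X=Cb$. Such a constant matrix $C$ is unique iff $\nu=q$. In all cases one can take $C=(I_\nu\otimes D_r^{-1})\mathcal{B}^0D_q^{-1}$.
   Context: Matrix indices start at $0$. $u(z)=(1,\dots,z^{q-1})^\top$, $w(z)=(1,\dots,z^{r-1})$, $M(z)=u(z)w(z)$, and $\mathcal{M}^0(z)=(M(z),M'(z),\dots,M^{(\nu-1)}(z))\in\mathbb{C}^{q\times\nu r}$. $D_n=\mathrm{diag}(0!,\dots,(n-1)!)$. $B^k\in\mathbb{R}^{r\times q}$ has entries $B^k_{ij}=(-1)^i\binom{q}{k+1}$ if $i+j=k$ and $0$ otherwise, and $\mathcal{B}^0\in\mathbb{R}^{\nu r\times q}$ stacks $B^0,\dots,B^{\nu-1}$ vertically. *)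

From HB Require Import structures.
From mathcomp Require Import all_boot all_order all_algebra.
From mathcomp Require Import reals.
From mathcomp Require Import complex mxtens.
Set Implicit Arguments. Unset Strict Implicit. Unset Printing Implicit Defensive.
Import Order.TTheory GRing.Theory Num.Theory.
Local Open Scope ring_scope.

(* Matrix indices start at 0.  R : realType plays the role of the reals,
   R[i] = complex R the complex numbers. *)

Section Defs.
Variable R : realType.
Local Notation C := (R[i]).

Definition upoly (q : nat) : 'cV[{poly C}]_q := \col_(i < q) 'X^i.
Definition wpoly (r : nat) : 'rV[{poly C}]_r := \row_(j < r) 'X^j.
Definition Mpoly (q r : nat) : 'M[{poly C}]_(q, r) := upoly q *m wpoly r.

Definition Mder (q r k : nat) (z : C) : 'M[C]_(q, r) :=
  map_mx (fun p : {poly C} => (p^`(k)).[z]) (Mpoly q r).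

(* M^0(z) = (M(z), M'(z), ..., M^(nu-1)(z)) in C^{q x nu r}:
   column c = k*r + j (k < nu, j < r) is column j of M^(k)(z). *)
Definition Mcal0 (q r nu : nat) (z : C) : 'M[C]_(q, nu * r) :=
  \matrix_(i < q, c < nu * r)
     Mder q r (mxtens_unindex c).1 z i (mxtens_unindex c).2.

Definition Dn (n : nat) : 'M[R]_n := diag_mx (\row_(i < n) (i`!)%:R).

Definition Bk (q r k : nat) : 'M[R]_(r, q) :=
  \matrix_(i < r, j < q)
     (if (i + j == k)%N then (-1) ^+ i * ('C(q, k.+1))%:R else 0).

Definition Bcal0 (q r nu : nat) : 'M[R]_(nu * r, q) :=
  \matrix_(c < nu * r, j < q) Bk q r (mxtens_unindex c).1 (mxtens_unindex c).2 j.

Definition Cexpl (q r nu : nat) : 'M[R]_(nu * r, q) :=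
  ((1%:M : 'M[R]_nu) *t invmx (Dn r)) *m Bcal0 q r nu *m invmx (Dn q).

Definition toC (m n : nat) (A : 'M[R]_(m, n)) : 'M[C]_(m, n) :=
  map_mx (real_complex R) A.

Definition const_rinv (q r nu : nat) (X : 'M[R]_(nu * r, q)) : Prop :=
  forall z : C, Mcal0 q r nu z *m toC X = 1%:M.
End Defs.
Arguments Mcal0 {R} q r nu z.
Arguments Cexpl {R} q r nu.
Arguments toC {R m n} A.
Arguments const_rinv {R q r nu} X.
Arguments Dn {R} n.
Arguments Bcal0 {R} q r nu.
Arguments Bk {R} q r k.

From HB Require Import structures.
From mathcomp Require Import all_boot all_order all_algebra.
From mathcomp Require Import reals.
From mathcomp Require Import complex mxtens.
From mathcomp Require Import zify ring.
Import GRing.Theory Num.Theory.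
Local Open Scope ring_scope.

(* Entry (i, (k, j)) of M^0(z) is the k-th derivative of z^(i+j), namely
   (i+j)^_k z^(i+j-k).  In M^0(z) C only the entries with k = j + l meet a
   nonzero entry of C, and (i+j)^_(j+l) = C(i+j, j) C(i, l) j! l!, so the
   entry (i, l) of the product is z^(i-l) C(i, l) times
   sum_j (-1)^j C(i+j, j) C(q, j+l+1); this alternating sum is the coefficient
   of x^(q-l-1) in (1+x)^-(i+1) (1+x)^q, hence equals [i = l].
   For nu > q, the column (k, j) = (q, 0) of M^0(z) holds the q-th
   derivatives of 1, ..., z^(q-1), so it vanishes and C can be perturbed in
   the corresponding row.  For nu = q, a column of the difference
   of two right inverses yields polynomials f_k with
   sum_k (X^i f_k)^(k) = 0 for all i < q; using (X g)^(n) = X g^(n) + n g^(n-1)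
   one eliminates the powers of X and shows f_(q-1) = ... = f_0 = 0. *)

Section AlternatingBinomialSums.
Variable T : pzRingType.

Definition alt_bin_conv (a n Q : nat) : T :=
  \sum_(m < n.+1) (-1) ^+ m * 'C(a + m, m)%:R * 'C(Q, n - m)%:R.

Lemma alt_bin_conv0n a Q : alt_bin_conv a 0 Q = 1.
Proof. by rewrite /alt_bin_conv big_ord1 addn0 !bin0 expr0 !mul1r. Qed.

Lemma alt_bin_conv0S n Q :
  alt_bin_conv 0 n.+1 Q = 'C(Q, n.+1)%:R - alt_bin_conv 0 n Q.
Proof.
rewrite /alt_bin_conv big_ord_recl /= binn expr0 !mul1r subn0; congr (_ + _).
rewrite -sumrN; apply: eq_bigr => m _ /=.
by rewrite !add0n !binn subSS exprS !mulN1r !mulr1 mulNr.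
Qed.

Lemma alt_bin_convSS a n Q :
  alt_bin_conv a.+1 n.+1 Q = alt_bin_conv a n.+1 Q - alt_bin_conv a.+1 n Q.
Proof.
rewrite /alt_bin_conv big_ord_recl [X in _ = X - _]big_ord_recl /=.
rewrite !addn0 !bin0 subn0 -addrA; congr (_ + _).
rewrite -sumrN -big_split; apply: eq_bigr => m _ /=.
rewrite subSS /bump /= !add1n addnS binS natrD !exprS !mulN1r addSn -addnS.
by rewrite mulrDr mulrDl !mulNr.
Qed.

(* Coefficient of x^n in (1 + x)^-(a+1) * (1 + x)^(a+1+s) = (1 + x)^s. *)
Lemma alt_bin_convE a s n : alt_bin_conv a n (a + 1 + s) = 'C(s, n)%:R.
Proof.
elim: a s n => [|a IHa] s n.
  elim: n => [|n IHn]; first by rewrite alt_bin_conv0n bin0.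
  by rewrite alt_bin_conv0S IHn add0n add1n binS natrD addrK.
elim: n => [|n IHn]; first by rewrite alt_bin_conv0n bin0.
rewrite alt_bin_convSS IHn (_ : (a.+1 + 1 + s = a + 1 + s.+1)%N); last by lia.
by rewrite IHa binS natrD addrK.
Qed.

Lemma sum_alt_bin_delta q i l N : (l <= i < q)%N -> (q - l <= N)%N ->
  \sum_(j < N) (-1) ^+ j * 'C(i + j, j)%:R * 'C(q, j + l + 1)%:R
  = (i == l)%:R :> T.
Proof.
move=> /andP[li iq] leN.
pose F j : T := (-1) ^+ j * 'C(i + j, j)%:R * 'C(q, j + l + 1)%:R.
have trunc : \sum_(j < N) F j = \sum_(j < q - l) F j.
  rewrite [RHS](big_ord_widen N F leN) [RHS]big_mkcond /=.
  apply: eq_bigr => j _.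
  case: ltnP => // le_ql_j; rewrite /F (@bin_small q) ?mulr0 //; lia.
rewrite trunc (_ : (q - l = (q - l - 1).+1)%N); last by lia.
transitivity (alt_bin_conv i (q - l - 1) q).
  apply: eq_bigr => m _; have lt_m := ltn_ord m.
  rewrite /F -(@bin_sub q (m + l + 1)); last by lia.
  by congr (_ * 'C(q, _)%:R); lia.
rewrite -{2}(_ : (i + 1 + (q - i - 1) = q)%N); last by lia.
rewrite alt_bin_convE; case: eqP => [->|/eqP ne_il]; first by rewrite binn.
by rewrite bin_small //; lia.
Qed.

End AlternatingBinomialSums.

Lemma ffact_addn_bin i j l : (l <= i)%N ->
  (i + j) ^_ (j + l) = ('C(i + j, j) * 'C(i, l) * j`! * l`!)%N.
Proof.
move=> li; apply/eqP; rewrite -(eqn_pmul2r (fact_gt0 (i - l))); apply/eqP.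
rewrite (_ : (i - l = i + j - (j + l))%N) ?ffact_fact; try lia.
rewrite -(bin_fact (leq_addl i j)) (_ : (i + j - j = i)%N); last by lia.
rewrite -(bin_fact li) (_ : (i + j - (j + l) = i - l)%N); last by lia.
ring.
Qed.

Lemma sum_mxtens (T : nmodType) m n (F : 'I_(m * n) -> T) :
  \sum_(c < m * n) F c = \sum_(k < m) \sum_(j < n) F (mxtens_index (k, j)).
Proof.
rewrite pair_big (reindex (@mxtens_index m n)) /=; last first.
  by exists (@mxtens_unindex m n) => c _; [exact: mxtens_indexK|exact: mxtens_unindexK].
by apply: eq_bigr => -[].
Qed.

Section ExplicitRightInverse.
Variable R : realType.

Lemma Mcal0E q r nu (z : R[i]) i k j :
  Mcal0 q r nu z i (mxtens_index (k, j)) = z ^+ (i + j - k) *+ (i + j) ^_ k.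
Proof.
rewrite /Mcal0 mxE mxtens_indexK /Mder mxE /Mpoly mxE big_ord1 !mxE.
by rewrite -exprD derivnXn hornerMn hornerXn.
Qed.

Lemma invmx_Dn n : invmx (Dn n : 'M[R]_n) = diag_mx (\row_(i < n) (i`!)%:R^-1).
Proof.
have Dn_inv : (Dn n : 'M[R]_n) *m diag_mx (\row_(i < n) (i`!)%:R^-1) = 1%:M.
  rewrite /Dn mulmx_diag; apply/matrixP => i j; rewrite !mxE.
  by rewrite mulfV // pnatr_eq0 -lt0n fact_gt0.
have [Dn_unit _] := mulmx1_unit Dn_inv.
by rewrite -[RHS]mul1mx -(mulVmx Dn_unit) -mulmxA Dn_inv mulmx1.
Qed.

Lemma CexplE q r nu k j l :
  Cexpl q r nu (mxtens_index (k, j)) l =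
  if (j + l == k)%N then (-1) ^+ j * 'C(q, k.+1)%:R / (j`! * l`!)%:R else 0 :> R.
Proof.
rewrite /Cexpl !invmx_Dn mul_mx_diag mxE [(\row__ _) 0 l]mxE.
rewrite mxE sum_mxtens (bigD1 k) //= [X in _ + X]big1 ?addr0; last first.
  move=> k' /negPf nk; apply: big1 => j' _.
  by rewrite tensmxE mxE eq_sym nk !mul0r.
rewrite (bigD1 j) //= [X in _ + X]big1 ?addr0; last first.
  move=> j' /negPf nj.
  by rewrite tensmxE [diag_mx _ _ _]mxE eq_sym nj mulr0n mulr0 mul0r.
rewrite tensmxE !mxE !eqxx mxtens_indexK mul1r mulr1n natrM invfM.
rewrite /=; case: eqP => _; last by rewrite mulr0 mul0r.
ring.
Qed.

Lemma Mcal0_Cexpl q r nu (z : R[i]) i l : (q <= nu)%N ->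
  (Mcal0 q r nu z *m toC (Cexpl q r nu)) i l =
  \sum_(j < r) z ^+ (i - l) *+ (i + j) ^_ (j + l) *
    real_complex R ((-1) ^+ j * 'C(q, j + l + 1)%:R / (j`! * l`!)%:R).
Proof.
move=> le_q_nu; rewrite mxE sum_mxtens exchange_big /=; apply: eq_bigr => j _.
under eq_bigr => k _ do rewrite [toC _ _ _]mxE CexplE Mcal0E.
have [lt_jl_nu | le_nu_jl] := ltnP (j + l) nu.
  rewrite (bigD1 (Ordinal lt_jl_nu)) //= big1 ?eqxx ?addr0 => [|k].
    by rewrite addn1 (_ : (i + j - (j + l) = i - l)%N) //; lia.
  by rewrite -val_eqE /= eq_sym => /negPf->; rewrite rmorph0 mulr0.
rewrite big1 => [|k _]; last first.
  rewrite ifF ?rmorph0 ?mulr0 //; apply/negbTE.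
  by rewrite neq_ltn (leq_trans _ le_nu_jl) ?orbT.
by rewrite (@bin_small q) ?mulr0 ?mul0r ?rmorph0 ?mulr0 //; lia.
Qed.

Lemma Cexpl_rinv {q r nu} :
  (q <= r)%N -> (q <= nu)%N -> const_rinv (Cexpl (R:=R) q r nu).
Proof.
move=> le_q_r le_q_nu z; apply/matrixP => i l; rewrite Mcal0_Cexpl // mxE.
have [lt_il | le_li] := ltnP i l.
  rewrite big1 => [|j _]; last by rewrite ffact_small ?mul0r //; lia.
  by rewrite (_ : (i == l) = false) //; apply/negbTE; rewrite neq_ltn lt_il.
transitivity (z ^+ (i - l) * real_complex R ('C(i, l)%:R *
    \sum_(j < r) (-1) ^+ j * 'C(i + j, j)%:R * 'C(q, j + l + 1)%:R)).
  rewrite mulr_sumr rmorph_sum mulr_sumr; apply: eq_bigr => j _.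
  rewrite ffact_addn_bin // -mulr_natr -mulrA -(rmorph_nat (real_complex R)).
  rewrite -rmorphM; congr (_ * real_complex R _); rewrite !natrM.
  have fact_neq0 n : (n`!%:R : R) != 0 by rewrite pnatr_eq0 -lt0n fact_gt0.
  by field; rewrite !fact_neq0.
rewrite sum_alt_bin_delta ?(ltn_ord i) ?le_li //; last by lia.
have [/val_inj-> | /negbTE ne_il] := eqVneq (val i) (val l).
  by rewrite !eqxx subnn binn expr0 !mulr1 rmorph1.
by rewrite -val_eqE ne_il mulr0 rmorph0 mulr0.
Qed.

End ExplicitRightInverse.

Lemma poly_eq0_horner (T : numDomainType) (p : {poly T}) :
  (forall z, p.[z] = 0) -> p = 0.
Proof.
move=> p_root; apply/eqP; apply: contraT => nz_p.
pose s := [seq (n%:R : T) | n <- iota 0 (size p)].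
have s_roots : all (root p) s by apply/allP => x /mapP[n _ ->]; exact/rootP.
have s_uniq : uniq s.
  by rewrite map_inj_uniq ?iota_uniq // => m n /eqP; rewrite eqr_nat => /eqP.
by have := max_poly_roots nz_p s_roots s_uniq; rewrite size_map size_iota ltnn.
Qed.

Lemma derivn_mulX (T : nzRingType) (g : {poly T}) n :
  ('X * g)^`(n) = 'X * g^`(n) + g^`(n.-1) *+ n.
Proof.
elim: n => [|n IHn]; first by rewrite !derivn0 mulr0n addr0.
rewrite derivnS IHn derivD derivM derivX mul1r derivMn -derivnS.
case: n IHn => [|n] _; first by rewrite !mulr0n addr0 mulr1n addrC.
by rewrite -derivnS /= (mulrS _ n.+1) addrCA addrA.
Qed.

(* Q i m is the m-th step of eliminating the factor X^i: Q i 0 is the i-th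
   hypothesis and Q 0 m = m! f m once f (m+1), ..., f (q-1) are known to vanish. *)
Lemma derivn_mulXn_sum_eq0 (T : numDomainType) q (f : 'I_q -> {poly T}) :
  (forall i, (i < q)%N -> \sum_(k < q) ('X^i * f k)^`(k) = 0) ->
  forall k, f k = 0.
Proof.
move=> hyp.
pose Q i m := \sum_(k < q) ('X^i * f k)^`(k - m) *+ k ^_ m.
have Q_rec i m : Q i m.+1 = Q i.+1 m - 'X * Q i m.
  rewrite /Q mulr_sumr -sumrB; apply: eq_bigr => k _.
  rewrite exprS -mulrA derivn_mulX mulrnDl mulrnAr addrAC subrr add0r.
  by rewrite -mulrnA subnS ffactnSr mulnC.
have Q_eq0 m i : (i + m < q)%N -> Q i m = 0.
  elim: m i => [|m IHm] i lt_imq.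
    rewrite /Q -[RHS](hyp i); last by rewrite addn0 in lt_imq.
    by apply: eq_bigr => k _; rewrite subn0.
  by rewrite Q_rec !IHm ?mulr0 ?subrr //; lia.
suff f_eq0 t (k : 'I_q) : (q - t <= k)%N -> f k = 0.
  by move=> k; apply: (f_eq0 q); rewrite subnn.
elim: t k => [|t IHt] k le_k; first by move: (ltn_ord k); lia.
have [|lt_k] := leqP (q - t) k; first exact: IHt.
have Q0k : Q 0%N k = f k *+ k`!.
  rewrite /Q (bigD1 k) //= big1 => [|k' ne_k'].
    by rewrite mul1r subnn ffactnn addr0.
  have [lt_k'k | le_kk'] := ltnP k' k; first by rewrite ffact_small ?mulr0n.
  rewrite IHt ?mulr0 ?derivn0 ?raddf0 ?mul0rn //.
  by move: ne_k' le_kk'; rewrite -val_eqE /=; lia.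
apply/eqP; have := Q_eq0 k 0%N (ltn_ord k); rewrite Q0k => /eqP.
by rewrite -mulr_natr -polyC_natr mulf_eq0 polyC_eq0 pnatr_eq0 eqn0Ngt fact_gt0 orbF.
Qed.

Section Uniqueness.
Variable R : realType.

Lemma Mcal0_mulmxE {q r nu n} (z : R[i]) (A : 'M[R[i]]_(nu * r, n)) i l :
  (Mcal0 q r nu z *m A) i l =
  (\sum_(k < nu) ('X^i * \sum_(j < r) A (mxtens_index (k, j)) l *: 'X^j)^`(k)).[z].
Proof.
rewrite mxE sum_mxtens horner_sum; apply: eq_bigr => k _.
rewrite mulr_sumr raddf_sum horner_sum; apply: eq_bigr => j _.
rewrite Mcal0E -scalerAr /= derivnZ hornerZ -exprD derivnXn hornerMn hornerXn.
by rewrite mulrC.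
Qed.

Lemma Mcal0_square_kernel q r n (A : 'M[R[i]]_(q * r, n)) :
  (forall z, Mcal0 q r q z *m A = 0) -> A = 0.
Proof.
move=> kerA; apply/matrixP => c l; rewrite mxE; case: (mxtens_indexP c) => k j.
pose f k := \sum_(j < r) A (mxtens_index (k, j)) l *: 'X^j.
have f_eq0 : forall k, f k = 0.
  apply: derivn_mulXn_sum_eq0 => i lt_iq; apply: poly_eq0_horner => z.
  by rewrite -(Mcal0_mulmxE z A (Ordinal lt_iq)) kerA mxE.
have := congr1 (fun p : {poly R[i]} => p`_j) (f_eq0 k).
rewrite coef0 coef_sum (bigD1 j) //= big1 => [|j' ne_j'j].
  by rewrite coefZ coefXn eqxx mulr1 addr0.
by rewrite coefZ coefXn val_eqE eq_sym (negPf ne_j'j) mulr0.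
Qed.

Lemma const_rinv_unique q r (X Y : 'M[R]_(q * r, q)) :
  const_rinv X -> const_rinv Y -> X = Y.
Proof.
move=> rinvX rinvY; apply: (@map_mx_inj _ _ (real_complex R)); apply/eqP.
rewrite -subr_eq0 -map_mxB; apply/eqP/Mcal0_square_kernel => z.
by rewrite map_mxB mulmxBr rinvX rinvY subrr.
Qed.

Lemma col_Mcal0_eq0 q r nu (lt_q_nu : (q < nu)%N) (r_gt0 : (0 < r)%N) (z : R[i]) :
  col (mxtens_index (Ordinal lt_q_nu, Ordinal r_gt0)) (Mcal0 q r nu z) = 0.
Proof.
apply/matrixP => i j; rewrite mxE [RHS]mxE Mcal0E ffact_small ?mulr0n //=.
by rewrite addn0 ltn_ord.
Qed.

Lemma const_rinv_not_unique {q r nu} {X : 'M[R]_(nu * r, q)} :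
  (q < nu)%N -> (0 < r)%N -> (0 < q)%N -> const_rinv X ->
  exists2 Y, const_rinv Y & Y != X.
Proof.
move=> lt_q_nu r_gt0 q_gt0 rinvX.
pose c := mxtens_index (Ordinal lt_q_nu, Ordinal r_gt0).
pose E : 'M[R]_(nu * r, q) := delta_mx c (Ordinal q_gt0).
exists (X + E).
  move=> z; rewrite /toC map_mxD mulmxDr rinvX map_delta_mx.
  by rewrite -(mul_delta_mx (0 : 'I_1)) mulmxA -colE col_Mcal0_eq0 mul0mx addr0.
rewrite -subr_eq0 addrC addKr; apply/eqP => /matrixP/(_ c (Ordinal q_gt0)).
by rewrite !mxE !eqxx => /eqP; rewrite oner_eq0.
Qed.

End Uniqueness.

Theorem proposition7p1 (R : realType) (q r nu : nat) :
  (0 < q)%N -> (0 < r)%N -> (0 < nu)%N -> (q <= r)%N -> (q <= nu)%N ->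
  [/\ (exists X : 'M[R]_(nu * r, q),
         const_rinv X /\
         (forall (b : 'cV[R]_q) (z : R[i]),
             Mcal0 q r nu z *m toC (X *m b) = toC b)),
      ((forall X Y : 'M[R]_(nu * r, q), const_rinv X -> const_rinv Y -> X = Y)
         <-> nu = q)
    & const_rinv (Cexpl (R:=R) q r nu)].
Proof.
move=> q_gt0 r_gt0 _ le_q_r le_q_nu.
have rinvC := Cexpl_rinv R le_q_r le_q_nu.
split=> //.
- exists (Cexpl q r nu); split=> // b z.
  by rewrite /toC map_mxM mulmxA rinvC mul1mx.
split=> [unique | ->]; last exact: const_rinv_unique.
apply/eqP; rewrite eqn_leq le_q_nu andbT leqNgt; apply/negP => lt_q_nu.
have [Y rinvY] := const_rinv_not_unique R lt_q_nu r_gt0 q_gt0 rinvC.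
by rewrite (unique _ _ rinvY rinvC) eqxx.
Qed.
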